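(* For integers $k\ge1$ define the differential operators in the variables $t_1,t_2,\dots$ $$L_k=\frac{\partial}{\partial t_k}-\sum_{n\ge1}n\,t_n\,\frac{\partial}{\partial t_{n+k}}.$$ Then (i) $[L_n,L_m]=(m-n)L_{m+n}$ for all $n,m\ge1$; and (ii) if $U$ solves $\sum_{n\ge1}n t_n U^n=1$ (with $U=\frac1{t_1}+\dots$) and $f_0$ is any function with $\partial f_0/\partial t_n=U^n$ for all $n\ge1$ (e.g. $f_0=\sum_{n\ge1}t_nU^n-\ln U$), then $L_kf_0=0$ for all $k\ge1$.
   Context: The operators act on (formal power series or smooth) functions of countably many variables $t_1,t_2,\dots$; each application involves only finitely many nonzero terms on functions depending on finitely many variables, or is understood formally. *)

From HB Require Import structures.
From mathcomp Require Import all_boot all_order all_algebra.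
From Stdlib Require Import Reals.
Set Implicit Arguments. Unset Strict Implicit. Unset Printing Implicit Defensive.
Import GRing.Theory.

(* ---------- Part (i): abstract algebra of functions of t_1, t_2, ... ----------
   A : commutative ring of "functions"; t n : the coordinate function t_n (n >= 1);
   D n : the partial derivative d/dt_n (n >= 1).  For f depending only on
   t_1..t_N (i.e. D j f = 0 for j > N) the infinite sum in L_k has only the
   terms n <= N nonzero, so L_k f is the truncated sum below. *)
Section PartI.
Local Open Scope ring_scope.
Variable A : comRingType.

Definition Lop (t : nat -> A) (D : nat -> A -> A) (N k : nat) (f : A) : A :=
  D k f - \sum_(1 <= n < N.+1) n%:R * t n * D (n + k)%N f.

Definition is_derivation (D : A -> A) : Prop :=
  (forall x y, D (x + y) = D x + D y) /\ (forall x y, D (x * y) = D x * y + x * D y).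

Definition kron (m n : nat) : A := (m == n)%:R.

Definition int_coef (z : int) : A := z%:~R.
End PartI.

Section PartII.
Local Open Scope R_scope.

Definition upd (t : nat -> R) (n : nat) (x : R) : nat -> R :=
  fun i => if Nat.eqb i n then x else t i.

Definition has_partial (f : (nat -> R) -> R) (n : nat) (t : nat -> R) (l : R) : Prop :=
  derivable_pt_lim (fun x => f (upd t n x)) (t n) l.

Definition L_value (f : (nat -> R) -> R) (k : nat) (t : nat -> R) (v : R) : Prop :=
  exists (dk s : R) (g : nat -> R),
    has_partial f k t dk /\
    (forall n, (1 <= n)%nat -> has_partial f (n + k) t (g n)) /\
    infinite_sum (fun n => INR (S n) * t (S n) * g (S n)) s /\
    v = dk - s.

Definition U_equation_sum (t : nat -> R) (u c : R) : Prop :=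
  infinite_sum (fun n => INR (S n) * t (S n) * u ^ (S n)) c.
End PartII.

(* Write T_m g = sum_{a=1}^N a t_a D_{a+m} g for
   the "tail" of L_m, so that L_m = D_m - T_m on functions f of t_1..t_N.
   Since D_j t_a = [j = a], the Leibniz rule gives the commutator
     [D_j, T_m] g = j D_{j+m} g,
   and applying this inside T_n, the remaining double sum is symmetric in
   (n, m) because the D's commute, whence
     [T_n, T_m] f = (n - m) T_{n+m} f.
   Expanding [D_n - T_n, D_m - T_m] f with these two identities yields
   (m - n)(D_{m+n} - T_{m+n}) f.

   Part (ii) is a computation with series: df0/dt_{n+k} = U^n U^k, so the
   series in L_k f0 is U^k times sum n t_n U^n = 1, which cancels df0/dt_k. *)

From HB Require Import structures.
From mathcomp Require Import all_boot all_order all_algebra.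
From mathcomp Require Import ring.
Set Implicit Arguments. Unset Strict Implicit. Unset Printing Implicit Defensive.
Import GRing.Theory.

Section Derivation.
Local Open Scope ring_scope.
Variable A : comRingType.
Variable d : A -> A.
Hypothesis d_der : is_derivation d.

Lemma derD x y : d (x + y) = d x + d y.
Proof. by case: d_der. Qed.

Lemma derM x y : d (x * y) = d x * y + x * d y.
Proof. by case: d_der. Qed.

Lemma der0 : d 0 = 0.
Proof. by apply: (@addrI _ (d 0)); rewrite -derD !addr0. Qed.

Lemma derN x : d (- x) = - d x.
Proof. by apply/eqP; rewrite -addr_eq0 -derD addNr der0. Qed.

Lemma derB x y : d (x - y) = d x - d y.
Proof. by rewrite derD derN. Qed.

Lemma der_sum I (r : seq I) (P : pred I) (F : I -> A) :
  d (\sum_(i <- r | P i) F i) = \sum_(i <- r | P i) d (F i).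
Proof. exact: (big_morph d derD der0). Qed.

Lemma der1 : d 1 = 0.
Proof.
have d11 := derM 1 1; rewrite !mulr1 !mul1r in d11.
by apply: (@addrI _ (d 1)); rewrite addr0 -d11.
Qed.

(* Constants n%:R are annihilated, so d (n t_a X) only differentiates t_a X. *)
Lemma der_nat n : d n%:R = 0.
Proof. by elim: n => [|n IH]; [exact: der0 | rewrite mulrS derD der1 IH addr0]. Qed.
End Derivation.

Section KroneckerSum.
Local Open Scope ring_scope.
Variable A : comRingType.

Lemma kron_sum (Y : nat -> A) (c M : nat) : (0 < c)%N ->
  \sum_(1 <= a < M.+1) a%:R * kron A c a * Y a = if (c <= M)%N then c%:R * Y c else 0.
Proof.
move=> c_gt0; elim: M => [|M IH]; first by rewrite big_geq // leqNgt c_gt0.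
rewrite big_nat_recr //= IH /kron.
case: (ltngtP c M.+1) => [cM|cM|->].
- by rewrite ltnS in cM; rewrite cM mulr0 mul0r addr0.
- by rewrite leqNgt (ltnW cM) mulr0 mul0r addr0.
- by rewrite ltnn add0r mulr1.
Qed.
End KroneckerSum.

Section Witt.
Local Open Scope ring_scope.
Variable A : comRingType.
Variable t : nat -> A.
Variable D : nat -> A -> A.
Hypothesis D_der : forall j, (0 < j)%N -> is_derivation (D j).
Hypothesis D_comm : forall i j, (0 < i)%N -> (0 < j)%N -> forall x, D i (D j x) = D j (D i x).
Hypothesis D_coord : forall i j, (0 < i)%N -> (0 < j)%N -> D i (t j) = kron A i j.
Variable N : nat.

Definition supported (g : A) : Prop := forall j, (N < j)%N -> D j g = 0.

Definition tail (m : nat) (g : A) : A := \sum_(1 <= a < N.+1) a%:R * t a * D (a + m)%N g.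

Lemma LopE k g : Lop t D N k g = D k g - tail k g.
Proof. by []. Qed.

Lemma tailB m x y : (0 < m)%N -> tail m (x - y) = tail m x - tail m y.
Proof.
move=> m_gt0; rewrite /tail -sumrB; apply: eq_bigr => a _.
have am_gt0 : (0 < a + m)%N by rewrite addn_gt0 m_gt0 orbT.
by rewrite (derB (D_der am_gt0)) mulrBr.
Qed.

Lemma supported_D g j : (0 < j)%N -> supported g -> supported (D j g).
Proof.
move=> j_gt0 g_supp i Ni; have i_gt0 : (0 < i)%N by apply: leq_ltn_trans Ni.
by rewrite D_comm // g_supp // (der0 (D_der j_gt0)).
Qed.

Lemma D_tail j m g : (0 < j)%N -> (0 < m)%N -> supported g ->
  D j (tail m g) = j%:R * D (j + m)%N g + tail m (D j g).
Proof.
move=> j_gt0 m_gt0 g_supp; rewrite /tail (der_sum (D_der j_gt0)).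
under eq_big_nat => a /andP[a_gt0 _].
  rewrite !(derM (D_der j_gt0)) (der_nat (D_der j_gt0)) mul0r add0r D_coord //.
  rewrite D_comm ?addn_gt0 ?m_gt0 ?orbT //.
over.
rewrite big_split /= kron_sum //; congr (_ + _).
by case: leqP => // Nj; rewrite g_supp ?mulr0 // (leq_trans Nj) ?leq_addr.
Qed.

Lemma tail_tail_sym n m g : (0 < n)%N -> (0 < m)%N ->
  \sum_(1 <= b < N.+1) b%:R * t b * tail m (D (b + n)%N g)
  = \sum_(1 <= a < N.+1) a%:R * t a * tail n (D (a + m)%N g).
Proof.
move=> n_gt0 m_gt0; rewrite /tail.
under eq_bigr do rewrite mulr_sumr.
rewrite exchange_big /=; apply: eq_bigr => a _; rewrite mulr_sumr.
by apply: eq_bigr => b _; rewrite D_comm ?addn_gt0 ?n_gt0 ?m_gt0 ?orbT //; ring.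
Qed.

Lemma tail_comm n m f : (0 < n)%N -> (0 < m)%N -> supported f ->
  tail n (tail m f) - tail m (tail n f) = (n%:R - m%:R) * tail (n + m)%N f.
Proof.
move=> n_gt0 m_gt0 f_supp.
have expand k l : (0 < k)%N -> (0 < l)%N ->
    tail k (tail l f) = \sum_(1 <= b < N.+1) b%:R * t b * ((b + k)%N%:R * D (b + k + l)%N f)
                        + \sum_(1 <= b < N.+1) b%:R * t b * tail l (D (b + k)%N f).
  move=> k_gt0 l_gt0; rewrite -big_split; apply: eq_bigr => b _.
  by rewrite D_tail ?addn_gt0 ?k_gt0 ?orbT // mulrDr.
rewrite expand // expand // tail_tail_sym // opprD addrACA subrr addr0 -sumrB mulr_sumr.
by apply: eq_bigr => b _; rewrite -!addnA (addnC m n) !natrD; ring.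
Qed.

Lemma Lop_comm n m f : (0 < n)%N -> (0 < m)%N -> supported f ->
  Lop t D N n (Lop t D N m f) - Lop t D N m (Lop t D N n f)
  = int_coef A (Posz m - Posz n) * Lop t D N (m + n)%N f.
Proof.
move=> n_gt0 m_gt0 f_supp.
have TT : tail n (tail m f) = (n%:R - m%:R) * tail (n + m)%N f + tail m (tail n f).
  by apply/eqP; rewrite -subr_eq tail_comm.
have Dn_supp := supported_D n_gt0 f_supp; have Dm_supp := supported_D m_gt0 f_supp.
rewrite !LopE (derB (D_der n_gt0)) (derB (D_der m_gt0)) !tailB //.
rewrite !D_tail // D_comm // (addnC m n).
rewrite /int_coef intrB TT; ring.
Qed.
End Witt.

From Stdlib Require Import Reals.

Section SeriesCalculus.
Local Open Scope R_scope.

Lemma infinite_sum_scal (a : nat -> R) (s c : R) :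
  infinite_sum a s -> infinite_sum (fun n => a n * c) (s * c).
Proof.
move=> a_sum.
have cst : Un_cv (fun _ => c) c.
  by move=> eps eps_gt0; exists 0%nat => n _; rewrite /Rdist Rminus_diag Rabs_R0.
apply: (Un_cv_ext _ _ _ _ (CV_mult _ _ _ _ a_sum cst)) => n.
by rewrite Rmult_comm scal_sum.
Qed.

Lemma L_f0_vanishes (U f0 : (nat -> R) -> R) (t : nat -> R) :
  U_equation_sum t (U t) 1 ->
  (forall n : nat, (1 <= n)%nat -> has_partial f0 n t (U t ^ n)) ->
  forall k : nat, (1 <= k)%nat -> L_value f0 k t 0.
Proof.
move=> U_eq f0_partial k k_ge1.
exists (U t ^ k), (1 * U t ^ k), (fun n : nat => U t ^ (n + k)).
split; first exact: f0_partial.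
split; first by move=> n n_ge1; apply: f0_partial; rewrite (leq_trans k_ge1) ?leq_addl.
split; last by rewrite Rmult_1_l Rminus_diag.
apply: (Un_cv_ext _ _ _ _ (infinite_sum_scal (U t ^ k) U_eq)) => n.
by apply: sum_eq => i _; rewrite pow_add !Rmult_assoc.
Qed.
End SeriesCalculus.

Theorem mainTheorem5 :
  (* (i) [L_n, L_m] = (m - n) L_{m+n} *)
  (forall (A : comRingType) (t : nat -> A) (D : nat -> A -> A),
      (forall j, (0 < j)%N -> is_derivation (D j)) ->
      (forall i j, (0 < i)%N -> (0 < j)%N -> forall x, D i (D j x) = D j (D i x)) ->
      (forall i j, (0 < i)%N -> (0 < j)%N -> D i (t j) = kron A i j) ->
      forall (N : nat) (f : A),
        (forall j, (N < j)%N -> D j f = GRing.zero) ->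
        forall n m : nat, (0 < n)%N -> (0 < m)%N ->
          GRing.add (Lop t D N n (Lop t D N m f)) (GRing.opp (Lop t D N m (Lop t D N n f)))
          = GRing.mul (int_coef A (GRing.add (Posz m) (GRing.opp (Posz n))))
                      (Lop t D N (m + n) f))
  /\
  (* (ii) if sum_{n>=1} n t_n U^n = 1 and df0/dt_n = U^n for all n >= 1, then L_k f0 = 0 *)
  (forall (U f0 : (nat -> R) -> R) (t : nat -> R),
      U_equation_sum t (U t) 1%R ->
      (forall n, (1 <= n)%N -> has_partial f0 n t (pow (U t) n)) ->
      forall k, (1 <= k)%N -> L_value f0 k t 0%R).
Proof.
split.
- move=> A t D D_der D_comm D_coord N f f_supp n m n_gt0 m_gt0.
  exact: Lop_comm.
- exact: L_f0_vanishes.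
Qed.
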